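(* For every $\varepsilon>0$ there exists $p_0>0$ such that for every $p<p_0$, $$\mathbb{P}_p\big([0,p^{-5}]^2\text{ is internally filled}\big)\ge \exp\left[-\left(\frac16+\varepsilon\right)\frac1p\left(\log\frac1p\right)^2\right].$$
   Context: Let $\mathcal{N}=\{(2,0),(1,0),(0,1),(-1,0),(-2,0),(0,-1)\}$. For $A\subset\mathbb{Z}^2$, $\langle A\rangle$ denotes the final set obtained from $A$ by repeatedly adding any site $z$ such that $z+\mathcal{N}$ contains at least three sites of the current set. Under $\mathbb{P}_p$, each site of $\mathbb{Z}^2$ belongs to the random set $K$ independently with probability $p$. $[0,p^{-5}]^2$ denotes the set of sites of $\mathbb{Z}^2$ in that Euclidean square. A set $S$ is internally filled if $S\subset\langle K\cap S\rangle$. *)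

From Stdlib Require Import Reals ZArith List Lra ClassicalEpsilon.
Import ListNotations.
Open Scope R_scope.

Definition site : Type := (Z * Z)%type.

Definition site_add (z u : site) : site := ((fst z + fst u)%Z, (snd z + snd u)%Z).

Definition nbhd : list site :=
  [(2,0)%Z; (1,0)%Z; (0,1)%Z; ((-1),0)%Z; ((-2),0)%Z; (0,(-1))%Z].

Inductive closure (A : site -> Prop) : site -> Prop :=
  | cl_base : forall z, A z -> closure A z
  | cl_step : forall z u v w,
      In u nbhd -> In v nbhd -> In w nbhd ->
      u <> v -> u <> w -> v <> w ->
      closure A (site_add z u) -> closure A (site_add z v) ->
      closure A (site_add z w) -> closure A z.

Definition internally_filled (K S : site -> Prop) : Prop :=
  forall z, S z -> closure (fun w => K w /\ S w) z.

Definition in_box (p : R) (z : site) : Prop :=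
  0 <= IZR (fst z) <= / p ^ 5 /\ 0 <= IZR (snd z) <= / p ^ 5.

(* Explicit enumeration (without repetition) of the same finite set, for
   0 < p: coordinates 0 .. floor(p^-5)  (Int_part = floor). *)
Definition box_list (p : R) : list site :=
  let N := Z.to_nat (Int_part (/ p ^ 5)) in
  let c := map Z.of_nat (seq 0 (S N)) in
  list_prod c c.

Definition indicator (P : Prop) : R :=
  if excluded_middle_informative P then 1 else 0.

(* Probability, under product Bernoulli(p) measure on the sites of the
   finite list L, of an event E about the random set K ∩ L.
   [acc] collects the sites already declared occupied. *)
Fixpoint config_prob (p : R) (E : (site -> Prop) -> Prop)
    (L acc : list site) : R :=
  match L with
  | [] => indicator (E (fun z => In z acc))
  | z :: L' => p * config_prob p E L' (z :: acc)
               + (1 - p) * config_prob p E L' acc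
  end.

(* P_p([0,p^-5]^2 is internally filled).  The event only depends on
   K ∩ [0,p^-5]^2, so it is computed exactly from the marginal of the
   product measure on the box. *)
Definition prob_box_filled (p : R) : R :=
  config_prob p (fun K => internally_filled K (in_box p)) (box_list p) [].

(* A filled rectangle [0,b] x [0,d] is grown from the two occupied sites (0,0) and
   (1,0), revealing sites only when needed.  Because the neighbourhood has range 2
   horizontally, the rectangle widens as soon as one of its next three columns
   contains an occupied site, which happens with probability 1 - (1-p)^(3(d+1)); it
   gains a row as soon as one of b/2 disjoint pairs of adjacent sites in the next
   row is fully occupied, which happens with probability about p^2 b/2.
   Keeping the width near 2 exp(3ph)/p at height h, widening costs O(1) per row
   while the h-th row costs a factor p exp(3ph)/2.  Up to height log(1/p)/(3p) the
   total cost is sum_h (log(1/p) - 3ph) ~ log(1/p)^2/(6p).  Beyond that height the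
   rectangle is widened to O(log(1/p)/p^2) columns, after which every further row
   and column of the box is added with probability 1 - O(p^4), for a total cost
   of O(log(1/p)/p). *)

From Stdlib Require Import Reals Lra Lia List Permutation ZArith ClassicalEpsilon FinFun.
Import ListNotations.
Open Scope R_scope.

(** * Product measure and increasing events *)

Definition increasing_event (E : (site -> Prop) -> Prop) : Prop :=
  forall K K' : site -> Prop, (forall z, K z -> K' z) -> E K -> E K'.

Lemma NoDup_extract {A : Type} (s : A) (L : list A) : In s L -> NoDup L ->
  exists L0, Permutation L (s :: L0) /\ NoDup L0 /\
    (forall z, In z L -> z <> s -> In z L0) /\
    (forall z, In z L0 -> In z L /\ z <> s).
Proof.
  intros Hin Hnd. destruct (in_split _ _ Hin) as [l1 [l2 ->]].
  exists (l1 ++ l2). split; [|split; [|split]].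
  - apply Permutation_sym, Permutation_middle.
  - eapply NoDup_remove_1; eauto.
  - intros z Hz Hne. apply in_app_or in Hz. apply in_or_app. simpl in Hz.
    destruct Hz as [|[|]]; auto; congruence.
  - intros w Hz. split.
    + apply in_or_app. apply in_app_or in Hz. simpl. tauto.
    + intros ->. apply NoDup_remove_2 in Hnd. auto.
Qed.

Lemma config_prob_bounds p E L acc : 0 <= p <= 1 -> 0 <= config_prob p E L acc <= 1.
Proof.
  intros Hp; revert acc; induction L as [|z L IH]; intros acc; simpl.
  - unfold indicator. destruct (excluded_middle_informative _); lra.
  - destruct (IH (z :: acc)), (IH acc). nra.
Qed.

Section IncreasingEvent.

Variables (p : R) (E : (site -> Prop) -> Prop).
Hypotheses (Hp : 0 <= p <= 1) (HE : increasing_event E).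

Lemma config_prob_mono_acc L acc acc' : (forall z, In z acc -> In z acc') ->
  config_prob p E L acc <= config_prob p E L acc'.
Proof.
  revert acc acc'; induction L as [|z L IH]; intros acc acc' Hs; simpl.
  - unfold indicator.
    destruct (excluded_middle_informative _) as [h|h];
    destruct (excluded_middle_informative _) as [h'|h']; try lra.
    exfalso. apply h'. eapply HE; [|exact h]. simpl. auto.
  - assert (config_prob p E L (z :: acc) <= config_prob p E L (z :: acc')).
    { apply IH. intros w [->|Hw]; simpl; auto. }
    specialize (IH acc acc' Hs). nra.
Qed.

Lemma config_prob_perm L L' acc : Permutation L L' ->
  config_prob p E L acc = config_prob p E L' acc.
Proof.
  intros HP; revert acc; induction HP; intros acc; simpl.
  - reflexivity.
  - now rewrite !IHHP.
  - rewrite (Rle_antisym (config_prob p E l (y :: x :: acc)) (config_prob p E l (x :: y :: acc)));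
      [ring| |]; apply config_prob_mono_acc; simpl; tauto.
  - now rewrite IHHP1.
Qed.

Lemma config_prob_certain L acc : E (fun z => In z acc) -> config_prob p E L acc = 1.
Proof.
  revert acc; induction L as [|z L IH]; intros acc H; simpl.
  - unfold indicator. destruct (excluded_middle_informative _); tauto.
  - rewrite !IH; [ring|exact H|]. eapply HE; [|exact H]. simpl; auto.
Qed.

Lemma config_prob_split s L : In s L -> NoDup L ->
  exists L0, NoDup L0 /\
    (forall z, In z L -> z <> s -> In z L0) /\ (forall z, In z L0 -> In z L /\ z <> s) /\
    forall acc, config_prob p E L acc =
      p * config_prob p E L0 (s :: acc) + (1 - p) * config_prob p E L0 acc.
Proof.
  intros Hin Hnd. destruct (NoDup_extract s L Hin Hnd) as [L0 [HP [Hn [H1 H2]]]].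
  exists L0. repeat split; auto; try now apply H2.
  intros acc. now rewrite (config_prob_perm _ _ _ HP).
Qed.

(* Reveal the sites of [S] one by one: with probability [1 - (1-p)^|S|] one of
   them is occupied (yielding [X]), otherwise all of them are empty (yielding [Y]). *)
Lemma config_prob_reveal_seq S L acc X Y :
  NoDup L -> NoDup S -> incl S L ->
  (forall S1 s S2, S = S1 ++ s :: S2 -> forall L' acc', NoDup L' ->
     (forall z, In z L -> ~ In z (S1 ++ [s]) -> In z L') ->
     (forall z, In z acc -> In z acc') -> In s acc' -> X <= config_prob p E L' acc') ->
  (forall L', NoDup L' -> (forall z, In z L -> ~ In z S -> In z L') ->
     Y <= config_prob p E L' acc) ->
  (1 - (1 - p) ^ length S) * X + (1 - p) ^ length S * Y <= config_prob p E L acc.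
Proof.
  revert L acc; induction S as [|s S IH]; intros L acc HL HS Hinc Hsucc Hfail.
  - simpl. replace ((1 - 1) * X + 1 * Y) with Y by ring. now apply Hfail.
  - destruct (config_prob_split s L (Hinc s (or_introl eq_refl)) HL)
      as [L0 [Hn [H1 [H2 ->]]]].
    inversion HS as [|? ? Hns HS']; subst.
    assert (Hocc : X <= config_prob p E L0 (s :: acc)).
    { apply (Hsucc [] s S eq_refl); simpl; auto. }
    assert (Hempty : (1 - (1 - p) ^ length S) * X + (1 - p) ^ length S * Y
                     <= config_prob p E L0 acc).
    { apply IH; auto.
      - intros z Hz. apply H1; [apply Hinc; simpl; auto|]. intros ->. auto.
      - intros S1 s' S2 -> L' acc' HL' Hc Hacc Hs'.
        apply (Hsucc (s :: S1) s' S2 eq_refl); auto.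
        intros z Hz Hz'. apply Hc; [apply H1; auto|]; intros E'; apply Hz'; subst; simpl; auto.
      - intros L' HL' Hc. apply Hfail; auto.
        intros z Hz Hz'. apply Hc; [apply H1; auto|]; intros E'; apply Hz'; subst; simpl; auto. }
    simpl length. set (q := (1 - p) ^ length S) in *. simpl. fold q. nra.
Qed.

Definition pair_sites (P : list (site * site)) : list site :=
  flat_map (fun pr => [fst pr; snd pr]) P.

(* Reveal the pairs of [P] one by one until both sites of some pair are occupied. *)
Lemma config_prob_reveal_pairs P L acc X :
  NoDup L -> NoDup (pair_sites P) -> incl (pair_sites P) L ->
  (forall P1 a c P2, P = P1 ++ (a, c) :: P2 -> forall L' acc', NoDup L' ->
     (forall z, In z L -> ~ In z (pair_sites P1 ++ [a; c]) -> In z L') ->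
     (forall z, In z acc -> In z acc') -> In a acc' -> In c acc' ->
     X <= config_prob p E L' acc') ->
  (1 - (1 - p * p) ^ length P) * X <= config_prob p E L acc.
Proof.
  revert L acc; induction P as [|[a c] P IH]; intros L acc HL HP Hinc Hsucc.
  - simpl. replace ((1 - 1) * X) with 0 by ring. now apply config_prob_bounds.
  - simpl in HP |- *. unfold pair_sites in Hinc. simpl in Hinc.
    inversion HP as [|? ? Hna HP1]; subst. inversion HP1 as [|? ? Hnc HP2]; subst.
    destruct (config_prob_split a L ltac:(apply Hinc; simpl; auto) HL)
      as [L0 [Hn [H1 [H2 Ha]]]].
    assert (Hc0 : In c L0).
    { apply H1; [apply Hinc; simpl; auto|]. intros ->. apply Hna; simpl; auto. }
    destruct (config_prob_split c L0 Hc0 Hn) as [L1 [Hn1 [H3 [H4 Hc]]]].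
    rewrite Ha, !Hc.
    assert (Hsub : forall z, In z L -> z <> a -> z <> c -> In z L1) by auto.
    assert (Hboth : X <= config_prob p E L1 (c :: a :: acc)).
    { apply (Hsucc [] a c P eq_refl); simpl; auto.
      intros z Hz Hz'. apply Hsub; auto; intros ->; apply Hz'; simpl; auto. }
    assert (Hnext : forall acc0, (forall z, In z acc -> In z acc0) ->
       (1 - (1 - p * p) ^ length P) * X <= config_prob p E L1 acc0).
    { intros acc0 Hacc0. apply IH; auto.
      - intros z Hz. apply Hsub; [apply Hinc; simpl; auto| |];
          intros ->; [apply Hna|apply Hnc]; simpl; auto.
      - intros P1 a' c' P2 -> L' acc' HL' Hc' Hacc Ha' Hc''.
        apply (Hsucc ((a, c) :: P1) a' c' P2 eq_refl); auto.
        intros z Hz Hz'. apply Hc'.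
        + apply Hsub; auto; intros ->; apply Hz'; simpl; auto.
        + intro Hz2. apply Hz'. simpl. right. right. exact Hz2. }
    assert (HB := Hnext (a :: acc) ltac:(simpl; auto)).
    assert (HC := Hnext (c :: acc) ltac:(simpl; auto)).
    assert (HD := Hnext acc ltac:(auto)).
    set (q := (1 - p * p) ^ length P) in *.
    set (v := (1 - q) * X) in *.
    assert (0 <= p * p * (config_prob p E L1 (c :: a :: acc) - X)) by (apply Rmult_le_pos; nra).
    assert (0 <= p * (1 - p) * (config_prob p E L1 (a :: acc) - v)) by (apply Rmult_le_pos; nra).
    assert (0 <= (1 - p) * p * (config_prob p E L1 (c :: acc) - v)) by (apply Rmult_le_pos; nra).
    assert (0 <= (1 - p) * (1 - p) * (config_prob p E L1 acc - v)) by (apply Rmult_le_pos; nra).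
    unfold v in *. nra.
Qed.

End IncreasingEvent.

(** * Growth of filled rectangles *)

Open Scope Z_scope.

Lemma closure_mono (A A' : site -> Prop) :
  (forall z, A z -> A' z) -> forall z, closure A z -> closure A' z.
Proof.
  intros HA z Hz; induction Hz.
  - now apply cl_base, HA.
  - now apply (cl_step A' z u v w).
Qed.

Lemma closure_step_at A x y u v w :
  In u nbhd -> In v nbhd -> In w nbhd -> u <> v -> u <> w -> v <> w ->
  closure A (x + fst u, y + snd u) -> closure A (x + fst v, y + snd v) ->
  closure A (x + fst w, y + snd w) -> closure A (x, y).
Proof. intros. now apply (cl_step A (x, y) u v w). Qed.

Lemma closure_at_eq A x y x' y' : x' = x -> y' = y -> closure A (x, y) -> closure A (x', y').
Proof. now intros -> ->. Qed.

Ltac in_nbhd := simpl; tauto.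
Ltac site_neq := let H := fresh in intro H; injection H; intros; discriminate.

Lemma closure_two_left A x y (o : site) :
  In o [(0,-1); (0,1); (1,0); (2,0)] ->
  closure A (x - 1, y) -> closure A (x - 2, y) -> closure A (x + fst o, y + snd o) ->
  closure A (x, y).
Proof.
  intros Ho H1 H2 H3.
  assert (G : In o nbhd /\ o <> (-1,0) /\ o <> (-2,0)).
  { simpl in Ho; destruct Ho as [<-|[<-|[<-|[<-|[]]]]];
      repeat split; try in_nbhd; site_neq. }
  destruct G as [G1 [G2 G3]].
  apply (closure_step_at A x y (-1,0) (-2,0) o); auto; try in_nbhd; try site_neq.
  - eapply closure_at_eq; [| |exact H1]; simpl; lia.
  - eapply closure_at_eq; [| |exact H2]; simpl; lia.
Qed.

Lemma closure_two_right_below A x y :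
  closure A (x + 1, y) -> closure A (x + 2, y) -> closure A (x, y - 1) ->
  closure A (x, y).
Proof.
  intros H1 H2 H3.
  apply (closure_step_at A x y (1,0) (2,0) (0,-1)); try in_nbhd; try site_neq.
  - eapply closure_at_eq; [| |exact H1]; simpl; lia.
  - eapply closure_at_eq; [| |exact H2]; simpl; lia.
  - eapply closure_at_eq; [| |exact H3]; simpl; lia.
Qed.

Definition rect_filled (A : site -> Prop) (b d : Z) : Prop :=
  forall x y, 0 <= x <= b -> 0 <= y <= d -> closure A (x, y).

Lemma rect_filled_mono A A' b d :
  (forall z, A z -> A' z) -> rect_filled A b d -> rect_filled A' b d.
Proof. intros HA Hf x y Hx Hy. eapply closure_mono; eauto. Qed.

(* One filled site next to a filled rectangle of width at least 2 fills the whole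
   new column: every site of it has its two left neighbours filled, and the
   already filled site of the column below or above it. *)
Lemma rect_filled_add_column A b d y0 : rect_filled A b d -> 1 <= b -> 0 <= y0 <= d ->
  closure A (b + 1, y0) -> rect_filled A (b + 1) d.
Proof.
  intros Hf Hb Hy0 Hc.
  assert (Up : forall k : nat, y0 + Z.of_nat k <= d -> closure A (b + 1, y0 + Z.of_nat k)).
  { induction k; intros Hk.
    - eapply closure_at_eq; [| |exact Hc]; lia.
    - apply (closure_two_left A _ _ (0,-1)); [simpl; tauto| | |].
      + apply Hf; lia.
      + apply Hf; lia.
      + eapply closure_at_eq; [| |apply IHk]; simpl; lia. }
  assert (Dn : forall k : nat, 0 <= y0 - Z.of_nat k -> closure A (b + 1, y0 - Z.of_nat k)).
  { induction k; intros Hk.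
    - eapply closure_at_eq; [| |exact Hc]; lia.
    - apply (closure_two_left A _ _ (0,1)); [simpl; tauto| | |].
      + apply Hf; lia.
      + apply Hf; lia.
      + eapply closure_at_eq; [| |apply IHk]; simpl; lia. }
  intros x y Hx Hy.
  destruct (Z.eq_dec x (b + 1)) as [->|Hne]; [|apply Hf; lia].
  destruct (Z_le_gt_dec y0 y).
  - eapply closure_at_eq; [| |apply (Up (Z.to_nat (y - y0)))]; lia.
  - eapply closure_at_eq; [| |apply (Dn (Z.to_nat (y0 - y)))]; lia.
Qed.

(* Two adjacent filled sites on top of a filled rectangle fill the whole new row:
   rightwards each site sees its two left neighbours and the site below, leftwards
   its two right neighbours and the site below. *)
Lemma rect_filled_add_row A b d x0 : rect_filled A b d -> 0 <= d -> 0 <= x0 -> x0 + 1 <= b ->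
  closure A (x0, d + 1) -> closure A (x0 + 1, d + 1) -> rect_filled A b (d + 1).
Proof.
  intros Hf Hd Hx0 Hxb C0 C1.
  assert (Rt : forall k : nat, x0 + 1 + Z.of_nat k <= b ->
     closure A (x0 + Z.of_nat k, d + 1) /\ closure A (x0 + 1 + Z.of_nat k, d + 1)).
  { induction k; intros Hk.
    - split; eapply closure_at_eq; [| |exact C0| | |exact C1]; lia.
    - destruct IHk as [I1 I2]; [lia|]. split.
      + eapply closure_at_eq; [| |exact I2]; lia.
      + apply (closure_two_left A _ _ (0,-1)); [simpl; tauto| | |].
        * eapply closure_at_eq; [| |exact I2]; lia.
        * eapply closure_at_eq; [| |exact I1]; lia.
        * apply Hf; simpl; lia. }
  assert (Lt : forall k : nat, 0 <= x0 - Z.of_nat k ->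
     closure A (x0 - Z.of_nat k, d + 1) /\ closure A (x0 - Z.of_nat k + 1, d + 1)).
  { induction k; intros Hk.
    - split; eapply closure_at_eq; [| |exact C0| | |exact C1]; lia.
    - destruct IHk as [I1 I2]; [lia|]. split.
      + apply closure_two_right_below.
        * eapply closure_at_eq; [| |exact I1]; lia.
        * eapply closure_at_eq; [| |exact I2]; lia.
        * apply Hf; lia.
      + eapply closure_at_eq; [| |exact I1]; lia. }
  intros x y Hx Hy.
  destruct (Z.eq_dec y (d + 1)) as [->|Hne]; [|apply Hf; lia].
  destruct (Z_le_gt_dec x0 x).
  - destruct (Z.eq_dec x x0) as [->|].
    + exact C0.
    + eapply closure_at_eq; [| |apply (proj2 (Rt (Z.to_nat (x - x0 - 1)) ltac:(lia)))]; lia.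
  - eapply closure_at_eq; [| |apply (proj1 (Lt (Z.to_nat (x0 - x)) ltac:(lia)))]; lia.
Qed.

(* The range 2 of the neighbourhood lets a filled site bridge a gap of up to two
   empty columns. *)
Lemma rect_filled_jump A b d e y0 : rect_filled A b d -> 1 <= b -> 0 <= e <= 2 -> 0 <= y0 <= d ->
  closure A (b + e + 1, y0) -> rect_filled A (b + e + 1) d.
Proof.
  intros Hf Hb He Hy0 Hc.
  assert (HE : e = 0 \/ e = 1 \/ e = 2) by lia.
  destruct HE as [HE|[HE|HE]]; subst e.
  - replace (b + 0 + 1) with (b + 1) in * by lia. eapply rect_filled_add_column; eauto.
  - assert (C1 : closure A (b + 1, y0)).
    { apply (closure_two_left A _ _ (1,0)); [simpl; tauto| | |].
      + apply Hf; lia. + apply Hf; lia.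
      + eapply closure_at_eq; [| |exact Hc]; simpl; lia. }
    assert (F1 := rect_filled_add_column A b d y0 Hf Hb Hy0 C1).
    replace (b + 1 + 1) with ((b + 1) + 1) by lia.
    apply (rect_filled_add_column A (b + 1) d y0 F1); [lia|lia|].
    eapply closure_at_eq; [| |exact Hc]; lia.
  - assert (C1 : closure A (b + 1, y0)).
    { apply (closure_two_left A _ _ (2,0)); [simpl; tauto| | |].
      + apply Hf; lia. + apply Hf; lia.
      + eapply closure_at_eq; [| |exact Hc]; simpl; lia. }
    assert (F1 := rect_filled_add_column A b d y0 Hf Hb Hy0 C1).
    assert (C2 : closure A (b + 1 + 1, y0)).
    { apply (closure_two_left A _ _ (1,0)); [simpl; tauto| | |].
      + apply F1; lia. + apply F1; lia.
      + eapply closure_at_eq; [| |exact Hc]; simpl; lia. }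
    assert (F2 := rect_filled_add_column A (b + 1) d y0 F1 ltac:(lia) Hy0 C2).
    replace (b + 2 + 1) with ((b + 1 + 1) + 1) by lia.
    apply (rect_filled_add_column A (b + 1 + 1) d y0 F2); [lia|lia|].
    eapply closure_at_eq; [| |exact Hc]; lia.
Qed.

Open Scope R_scope.

Lemma pow_unit_interval r n : 0 <= r <= 1 -> 0 <= r ^ n <= 1.
Proof. intros Hr. induction n; simpl; [lra|]. split; nra. Qed.

Lemma exp_le_mono x y : x <= y -> exp x <= exp y.
Proof. intros [H|H]; [left; now apply exp_increasing|subst; lra]. Qed.

Lemma exp_opp_le_1 x : 0 <= x -> exp (- x) <= 1.
Proof. intros. rewrite <- exp_0. apply exp_le_mono. lra. Qed.

Lemma exp_pow a n : exp a ^ n = exp (a * INR n).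
Proof.
  induction n; simpl.
  - now rewrite Rmult_0_r, exp_0.
  - rewrite IHn, <- exp_plus. f_equal. destruct n; simpl; ring.
Qed.

Lemma exp_opp_le_inv x : 0 <= x -> exp (- x) <= 1 / (1 + x).
Proof.
  intros Hx. rewrite exp_Ropp. pose proof (exp_ineq1_le x). pose proof (exp_pos x).
  unfold Rdiv. rewrite Rmult_1_l. apply Rinv_le_contravar; lra.
Qed.

Lemma exp_opp_double_le_1_minus z : 0 <= z <= 1 / 2 -> exp (- (2 * z)) <= 1 - z.
Proof.
  intros Hz. rewrite exp_Ropp. pose proof (exp_ineq1_le (2 * z)).
  pose proof (exp_pos (2 * z)).
  apply (Rmult_le_reg_r (exp (2 * z))); auto.
  rewrite Rinv_l by lra. nra.
Qed.

Lemma exp_le_1_plus_double x : 0 <= x <= 1 / 2 -> exp x <= 1 + 2 * x.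
Proof.
  intros Hx. pose proof (exp_ineq1_le (- x)) as H. rewrite exp_Ropp in H.
  pose proof (exp_pos x).
  assert (H1 : 1 - x <= / exp x) by lra.
  apply (Rmult_le_compat_r (exp x)) in H1; [|lra]. rewrite Rinv_l in H1 by lra.
  nra.
Qed.

Lemma pow_1_minus_le_exp q n : q <= 1 -> (1 - q) ^ n <= exp (- (q * INR n)).
Proof.
  intros Hq. replace (- (q * INR n)) with ((- q) * INR n) by ring.
  rewrite <- exp_pow. apply pow_incr. split; [lra|].
  pose proof (exp_ineq1_le (- q)). lra.
Qed.

Lemma exp_le_pow r c n : 0 <= c -> exp (- c) <= r -> exp (- (c * INR n)) <= r ^ n.
Proof.
  intros Hc Hr. replace (- (c * INR n)) with ((- c) * INR n) by ring.
  rewrite <- exp_pow. apply pow_incr. split; [left; apply exp_pos|auto].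
Qed.

Lemma pow_1_minus_cube_le_exp p m : 0 < p < 1 ->
  ((1 - p) ^ m) ^ 3 <= exp (- (3 * p * INR m)).
Proof.
  intros Hp. eapply Rle_trans.
  - apply pow_incr. split; [apply pow_le; lra|]. apply pow_1_minus_le_exp. lra.
  - rewrite exp_pow. apply exp_le_mono. simpl. lra.
Qed.

Lemma ln_2_pos : 0 < ln 2.
Proof. rewrite <- ln_1. apply ln_increasing; lra. Qed.

Lemma ln_2_lt_1 : ln 2 < 1.
Proof.
  rewrite <- (ln_exp 1). apply ln_increasing; [lra|]. pose proof (exp_ineq1 1). lra.
Qed.

Lemma exp_2_le_9 : exp 2 <= 9.
Proof.
  replace 2 with (1 + 1) by ring. rewrite exp_plus. pose proof exp_le_3.
  pose proof (exp_pos 1). nra.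
Qed.

Lemma exp_m1_le_half : exp (- (1)) <= 1 / 2.
Proof. pose proof (exp_opp_le_inv 1 ltac:(lra)). lra. Qed.

Lemma ln_le_id x : 0 < x -> ln x <= x.
Proof.
  intros Hx. rewrite <- (exp_ln x) at 2 by auto. pose proof (exp_ineq1_le (ln x)). lra.
Qed.

Lemma INR_Z_to_nat z : (0 <= z)%Z -> INR (Z.to_nat z) = IZR z.
Proof. intros Hz. rewrite INR_IZR_INZ, Z2Nat.id; auto. Qed.

Lemma up_pos_bounds r : 0 < r -> (1 <= up r)%Z /\ r <= INR (Z.to_nat (up r)) <= r + 1.
Proof.
  intros Hr. destruct (archimed r) as [H1 H2].
  assert (0 < IZR (up r)) by lra. apply lt_IZR in H.
  rewrite INR_Z_to_nat by lia. split; [lia|lra].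
Qed.

Lemma Int_part_nonneg_bounds r : 0 <= r ->
  (0 <= Int_part r)%Z /\ r - 1 < INR (Z.to_nat (Int_part r)) <= r.
Proof.
  intros Hr. destruct (base_Int_part r) as [H1 H2].
  assert (-1 < IZR (Int_part r)) by lra. apply lt_IZR in H.
  rewrite INR_Z_to_nat by lia. split; [lia|lra].
Qed.

(** * Exploration of the box *)

Fixpoint column_sites (c : Z) (n : nat) : list site :=
  match n with O => [] | S k => (c, Z.of_nat k) :: column_sites c k end.

Lemma column_sites_in c n z :
  In z (column_sites c n) <-> (fst z = c /\ 0 <= snd z < Z.of_nat n)%Z.
Proof.
  revert z; induction n; intros [x y]; simpl.
  - lia.
  - rewrite IHn. simpl. split.
    + intros [H|H]; [injection H; intros; subst; lia | lia].
    + intros [-> H]. destruct (Z.eq_dec y (Z.of_nat n)) as [->|]; [left; auto | right; lia].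
Qed.

Lemma column_sites_NoDup c n : NoDup (column_sites c n).
Proof.
  induction n; simpl; constructor; auto.
  rewrite column_sites_in. simpl. lia.
Qed.

Lemma column_sites_length c n : length (column_sites c n) = n.
Proof. induction n; simpl; auto. Qed.

Fixpoint row_pairs (y : Z) (n : nat) : list (site * site) :=
  match n with
  | O => []
  | S k => ((2 * Z.of_nat k, y), (2 * Z.of_nat k + 1, y))%Z :: row_pairs y k
  end.

Lemma row_pairs_sites_in y n z :
  In z (pair_sites (row_pairs y n)) <-> (snd z = y /\ 0 <= fst z < 2 * Z.of_nat n)%Z.
Proof.
  revert z; induction n; intros [a b].
  - simpl. lia.
  - change (In (a, b) ((2 * Z.of_nat n, y)%Z :: (2 * Z.of_nat n + 1, y)%Z
                       :: pair_sites (row_pairs y n)) <->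
            (snd (a, b) = y /\ 0 <= fst (a, b) < 2 * Z.of_nat (S n))%Z).
    split.
    + intros [H|[H|H]].
      * apply pair_equal_spec in H as [H1 H2]; subst; cbn [fst snd]; lia.
      * apply pair_equal_spec in H as [H1 H2]; subst; cbn [fst snd]; lia.
      * apply IHn in H; cbn [fst snd] in *; lia.
    + intros [Hb Ha]; cbn [fst snd] in Hb, Ha.
      destruct (Z.eq_dec a (2 * Z.of_nat n)) as [->|]; [left; f_equal; lia|].
      destruct (Z.eq_dec a (2 * Z.of_nat n + 1)) as [->|];
        [right; left; f_equal; lia|].
      right; right. apply IHn. cbn [fst snd]. lia.
Qed.

Lemma row_pairs_NoDup y n : NoDup (pair_sites (row_pairs y n)).
Proof.
  induction n; [constructor|].
  change (NoDup ((2 * Z.of_nat n, y)%Z :: (2 * Z.of_nat n + 1, y)%Z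
                 :: pair_sites (row_pairs y n))).
  constructor.
  - intros [H|H]; [apply pair_equal_spec in H; lia|].
    apply row_pairs_sites_in in H. cbn [fst snd] in H. lia.
  - constructor; auto. intros H. apply row_pairs_sites_in in H. cbn [fst snd] in H. lia.
Qed.

Lemma row_pairs_in y n a c : In (a, c) (row_pairs y n) ->
  exists i, (0 <= i /\ 2 * i + 1 < 2 * Z.of_nat n)%Z /\
            a = (2 * i, y)%Z /\ c = (2 * i + 1, y)%Z.
Proof.
  induction n; intros H; simpl in H; [contradiction|].
  destruct H as [H|H].
  - injection H; intros; subst. exists (Z.of_nat n). repeat split; lia.
  - destruct (IHn H) as [i [Hi R]]. exists i. split; [lia|auto].
Qed.

Lemma row_pairs_length y n : length (row_pairs y n) = n.
Proof. induction n; simpl; auto. Qed.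

Definition box_side (p : R) : Z := Int_part (/ p ^ 5).

Definition in_square (N : Z) (z : site) : Prop :=
  (0 <= fst z <= N)%Z /\ (0 <= snd z <= N)%Z.

Definition box_filled_event (p : R) (K : site -> Prop) : Prop :=
  internally_filled K (in_box p).

Lemma box_filled_event_increasing p : increasing_event (box_filled_event p).
Proof.
  intros K K' H HK z Hz. eapply closure_mono; [|apply HK; exact Hz].
  intros w [H1 H2]; split; auto.
Qed.

Lemma in_box_iff p z : 0 < p -> in_box p z <-> in_square (box_side p) z.
Proof.
  destruct z as [x y]; intros Hp. unfold in_box, in_square, box_side; simpl.
  destruct (base_Int_part (/ p ^ 5)) as [B1 B2].
  assert (Hgen : forall u : Z,
            0 <= IZR u <= / p ^ 5 <-> (0 <= u <= Int_part (/ p ^ 5))%Z).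
  { intros u; split; intros [h1 h2]; split.
    - now apply le_IZR.
    - assert (IZR u < IZR (Int_part (/ p ^ 5) + 1)) by (rewrite plus_IZR; lra).
      apply lt_IZR in H. lia.
    - now apply IZR_le.
    - apply IZR_le in h2. lra. }
  rewrite (Hgen x), (Hgen y). tauto.
Qed.

Lemma box_side_nonneg p : 0 < p -> (0 <= box_side p)%Z.
Proof.
  intros Hp. unfold box_side. destruct (base_Int_part (/ p ^ 5)) as [_ H].
  assert (0 < / p ^ 5) by (apply Rinv_0_lt_compat, pow_lt; auto).
  assert (-1 < IZR (Int_part (/ p ^ 5))) by lra.
  apply lt_IZR in H1. lia.
Qed.

Lemma box_side_bounds p : 0 < p -> / p ^ 5 - 1 < IZR (box_side p) <= / p ^ 5.
Proof. intros Hp. unfold box_side. destruct (base_Int_part (/ p ^ 5)). lra. Qed.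

Lemma NoDup_list_prod {A B : Type} (l : list A) (l' : list B) :
  NoDup l -> NoDup l' -> NoDup (list_prod l l').
Proof.
  intros H H'. induction H; simpl; [constructor|].
  apply NoDup_app; auto.
  - apply Injective_map_NoDup; auto. intros a b E. injection E; auto.
  - intros [u v] Hu Hv. apply in_map_iff in Hu. destruct Hu as [w [E _]].
    injection E; intros; subst. apply in_prod_iff in Hv. tauto.
Qed.

Lemma box_list_in p z : 0 < p -> In z (box_list p) <-> in_square (box_side p) z.
Proof.
  destruct z as [x y]; intros Hp. pose proof (box_side_nonneg p Hp) as HN0.
  unfold box_list, in_square, box_side in *. cbv beta zeta. cbn [fst snd].
  set (N := Int_part (/ p ^ 5)) in *.
  assert (Hc : forall u, In u (map Z.of_nat (seq 0 (S (Z.to_nat N)))) <-> (0 <= u <= N)%Z).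
  { intros u. rewrite in_map_iff. split.
    - intros [k [<- Hk]]. apply in_seq in Hk. lia.
    - intros Hu. exists (Z.to_nat u). split; [lia|]. apply in_seq. lia. }
  split; intros H.
  - apply in_prod_iff in H. now rewrite !Hc in H.
  - apply in_prod_iff. now rewrite !Hc.
Qed.

Lemma box_list_NoDup p : NoDup (box_list p).
Proof.
  unfold box_list. cbv beta zeta.
  apply NoDup_list_prod; apply Injective_map_NoDup;
    try (intros a b E; lia); apply seq_NoDup.
Qed.


Section Growth.

Variable p : R.
Hypothesis Hp : 0 < p < 1.

Local Notation N := (box_side p).

Definition filled_prob (L acc : list site) : R := config_prob p (box_filled_event p) L acc.

(* A state of the exploration: the occupied sites found so far ([acc]) fill the
   rectangle [0,b] x [0,d]; the [e] columns to its right have been found empty, and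
   [L] still contains every unexplored site of the box. *)
Definition growth_state (b d e : Z) (L acc : list site) : Prop :=
  NoDup L /\
  (forall z, in_square N z -> ~ ((0 <= fst z <= b + e)%Z /\ (0 <= snd z <= d)%Z) -> In z L) /\
  rect_filled (fun w => In w acc /\ in_box p w) b d.

Lemma closure_revealed acc z : In z acc -> in_square N z ->
  closure (fun w => In w acc /\ in_box p w) z.
Proof. intros Hz Hsq. apply cl_base. split; [exact Hz|]. apply in_box_iff; [lra|exact Hsq]. Qed.

Lemma step_right b d e L acc X Y : (1 <= b)%Z -> (0 <= e <= 2)%Z ->
  (b + e + 1 <= N)%Z -> (0 <= d <= N)%Z ->
  growth_state b d e L acc ->
  (forall L' acc', growth_state (b + e + 1) d 0 L' acc' -> X <= filled_prob L' acc') ->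
  (forall L', growth_state b d (e + 1) L' acc -> Y <= filled_prob L' acc) ->
  (1 - (1 - p) ^ (S (Z.to_nat d))) * X + (1 - p) ^ (S (Z.to_nat d)) * Y
  <= filled_prob L acc.
Proof.
  intros Hb He HbN Hd [HL [Hout Hf]] HX HY.
  set (C := column_sites (b + e + 1) (S (Z.to_nat d))).
  rewrite <- (column_sites_length (b + e + 1) (S (Z.to_nat d))). fold C.
  assert (HC : forall z, In z C <-> (fst z = b + e + 1 /\ 0 <= snd z <= d)%Z).
  { intros z. unfold C. rewrite column_sites_in. lia. }
  apply config_prob_reveal_seq.
  - lra.
  - apply box_filled_event_increasing.
  - exact HL.
  - apply column_sites_NoDup.
  - intros z Hz. apply HC in Hz. apply Hout; unfold in_square; lia.
  - intros S1 s S2 Heq L' acc' HL' Hc Hacc Hs.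
    assert (HsC : In s C) by (rewrite Heq; apply in_or_app; simpl; auto).
    apply HX. split; [auto|split].
    + intros z Hz Hnr. apply Hc.
      * apply Hout; auto. intros Hr; apply Hnr; lia.
      * intros Hz'. assert (In z C) as Hz2%HC; [|lia].
        rewrite Heq. apply in_or_app. apply in_app_or in Hz'. simpl in *. tauto.
    + destruct s as [sx sy]. apply HC in HsC. simpl in HsC. destruct HsC as [-> Hsy].
      apply (rect_filled_jump _ b d e sy); auto; try lia.
      * eapply rect_filled_mono; [|exact Hf]. intros w [h1 h2]; split; auto.
      * apply closure_revealed; [exact Hs|]. unfold in_square; cbn [fst snd]; lia.
  - intros L' HL' Hc. apply HY. split; [auto|split; auto].
    intros z Hz Hnr. apply Hc.
    + apply Hout; auto. intros Hr; apply Hnr; lia.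
    + intros Hz'. apply HC in Hz'. lia.
Qed.

(* Reveal the pairs [(2i, d+1), (2i+1, d+1)], [i < K], of the row above the rectangle. *)
Lemma step_up b d K L acc X : (0 <= d)%Z -> (d + 1 <= N)%Z ->
  (b <= N)%Z -> (2 * Z.of_nat K <= b + 1)%Z ->
  growth_state b d 0 L acc ->
  (forall L' acc', growth_state b (d + 1) 0 L' acc' -> X <= filled_prob L' acc') ->
  (1 - (1 - p * p) ^ K) * X <= filled_prob L acc.
Proof.
  intros Hd HdN HbN HK [HL [Hout Hf]] HX.
  rewrite <- (row_pairs_length (d + 1) K).
  apply config_prob_reveal_pairs.
  - lra.
  - apply box_filled_event_increasing.
  - exact HL.
  - apply row_pairs_NoDup.
  - intros z Hz. apply row_pairs_sites_in in Hz. apply Hout; unfold in_square; lia.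
  - intros P1 a c P2 Heq L' acc' HL' Hc Hacc Ha Hc'.
    assert (Hac : In (a, c) (row_pairs (d + 1) K))
      by (rewrite Heq; apply in_or_app; simpl; auto).
    destruct (row_pairs_in _ _ _ _ Hac) as [i [Hi [-> ->]]].
    apply HX. split; [auto|split].
    + intros z Hz Hnr. apply Hc.
      * apply Hout; auto. intros Hr; apply Hnr; lia.
      * intros Hz'. apply in_app_or in Hz'. destruct Hz' as [Hz'|Hz'].
        -- assert (In z (pair_sites (row_pairs (d + 1) K))) as Hrow%row_pairs_sites_in; [|lia].
           rewrite Heq. unfold pair_sites. rewrite flat_map_app. apply in_or_app; auto.
        -- cbn [In] in Hz'. destruct Hz' as [<-|[<-|[]]]; apply Hnr; cbn [fst snd]; lia.
    + apply (rect_filled_add_row _ b d (2 * i)); try lia.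
      * eapply rect_filled_mono; [|exact Hf]. intros w [h1 h2]; split; auto.
      * apply closure_revealed; [exact Ha|]. unfold in_square; cbn [fst snd]; lia.
      * apply closure_revealed; [exact Hc'|]. unfold in_square; cbn [fst snd]; lia.
Qed.

Lemma step_right_within3 b d L acc X : (1 <= b)%Z -> (b + 3 <= N)%Z ->
  (0 <= d <= N)%Z -> growth_state b d 0 L acc ->
  (forall j L' acc', (1 <= j <= 3)%Z -> growth_state (b + j) d 0 L' acc' ->
     X <= filled_prob L' acc') ->
  (1 - ((1 - p) ^ (S (Z.to_nat d))) ^ 3) * X <= filled_prob L acc.
Proof.
  intros Hb HbN Hd Hs HX.
  set (a := (1 - p) ^ (S (Z.to_nat d))).
  assert (H2 : forall L', growth_state b d 2 L' acc -> (1 - a) * X + a * 0 <= filled_prob L' acc).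
  { intros L' Hs'. apply (step_right b d 2); auto; try lia.
    - intros L'' acc'' HH; apply (HX 3%Z); [lia|].
      now replace (b + 3)%Z with (b + 2 + 1)%Z by lia.
    - intros. apply config_prob_bounds; lra. }
  assert (H1 : forall L', growth_state b d 1 L' acc ->
     (1 - a) * X + a * ((1 - a) * X + a * 0) <= filled_prob L' acc).
  { intros L' Hs'. apply (step_right b d 1); auto; try lia.
    intros L'' acc'' HH; apply (HX 2%Z); [lia|].
    now replace (b + 2)%Z with (b + 1 + 1)%Z by lia. }
  assert (H0 := step_right b d 0 L acc X _ Hb ltac:(lia) ltac:(lia) Hd Hs
    ltac:(intros L'' acc'' HH; apply (HX 1%Z); [lia|];
          now replace (b + 1)%Z with (b + 0 + 1)%Z by lia) H1).
  fold a in H0. replace (1 - a ^ 3) with (1 - a + a * (1 - a + a * (1 - a))) by ring.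
  lra.
Qed.

Lemma step_right_next b d L acc X : (1 <= b)%Z -> (b + 1 <= N)%Z ->
  (0 <= d <= N)%Z -> growth_state b d 0 L acc ->
  (forall j L' acc', (1 <= j <= 1)%Z -> growth_state (b + j) d 0 L' acc' ->
     X <= filled_prob L' acc') ->
  (1 - (1 - p) ^ (S (Z.to_nat d))) * X <= filled_prob L acc.
Proof.
  intros Hb HbN Hd Hs HX.
  assert (H0 := step_right b d 0 L acc X 0 Hb ltac:(lia) ltac:(lia) Hd Hs
    ltac:(intros L'' acc'' HH; apply (HX 1%Z); [lia|];
          now replace (b + 1)%Z with (b + 0 + 1)%Z by lia)
    ltac:(intros; apply config_prob_bounds; lra)).
  lra.
Qed.

Definition grows_from (B d : Z) (X : R) : Prop :=
  forall b L acc, (B <= b <= N)%Z -> growth_state b d 0 L acc -> X <= filled_prob L acc.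

Lemma grows_from_le B d X X' : grows_from B d X -> X' <= X -> grows_from B d X'.
Proof. intros HG HX b L acc Hb Hs. specialize (HG b L acc Hb Hs). lra. Qed.

Lemma grows_from_cost B d r c c' :
  grows_from B d (r * exp (- c)) -> exp (- c') <= r -> grows_from B d (exp (- (c' + c))).
Proof.
  intros HG Hr. eapply grows_from_le; [exact HG|].
  rewrite Ropp_plus_distr, exp_plus. apply Rmult_le_compat_r; [left; apply exp_pos|exact Hr].
Qed.

Lemma grows_from_full : grows_from N N 1.
Proof.
  intros b L acc Hb [HL [Hout Hf]].
  assert (b = N) by lia. subst b.
  unfold filled_prob; rewrite config_prob_certain;
    [lra|lra|apply box_filled_event_increasing|].
  intros [x y] Hz. apply (in_box_iff p) in Hz; [|lra].
  destruct Hz as [H1 H2]. apply Hf; auto.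
Qed.

Lemma grows_from_step_up B d K X : grows_from B (d + 1) X -> (0 <= d)%Z ->
  (d + 1 <= N)%Z -> (2 * Z.of_nat K <= B + 1)%Z ->
  grows_from B d ((1 - (1 - p * p) ^ K) * X).
Proof.
  intros HG Hd HdN HK b L acc Hb Hs.
  apply (step_up b d K L acc X); auto; try lia.
  intros L' acc' Hs'. now apply (HG b).
Qed.

Lemma grows_from_steps_up B D K X : grows_from B D X ->
  (D <= N)%Z -> (2 * Z.of_nat K <= B + 1)%Z ->
  forall k : nat, (0 <= D - Z.of_nat k)%Z ->
  grows_from B (D - Z.of_nat k) ((1 - (1 - p * p) ^ K) ^ k * X).
Proof.
  intros HG HD HK k. induction k; intros Hk.
  - simpl. replace (D - 0)%Z with D by lia. eapply grows_from_le; [exact HG|lra].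
  - rewrite <- tech_pow_Rmult, Rmult_assoc.
    apply grows_from_step_up; try lia.
    replace (D - Z.of_nat (S k) + 1)%Z with (D - Z.of_nat k)%Z by lia.
    apply IHk. lia.
Qed.

Lemma grows_from_steps_right B d X r k :
  grows_from B d X -> 0 <= X -> 0 <= r <= 1 -> (B + k - 1 <= N)%Z ->
  (forall b L acc Y, (1 <= b)%Z -> (b + k <= N)%Z -> growth_state b d 0 L acc ->
     (forall j L' acc', (1 <= j <= k)%Z -> growth_state (b + j) d 0 L' acc' ->
        Y <= filled_prob L' acc') ->
     r * Y <= filled_prob L acc) ->
  forall n B', (1 <= B')%Z -> (B <= B' + Z.of_nat n)%Z -> grows_from B' d (r ^ n * X).
Proof.
  intros HG HX Hr HBN Hstep n.
  induction n; intros B' HB' HBn b L acc Hb Hs.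
  - simpl. rewrite Rmult_1_l. apply (HG b); auto. lia.
  - destruct (Z_le_gt_dec B b).
    + pose proof (HG b L acc ltac:(lia) Hs). pose proof (pow_unit_interval r (S n) Hr). nra.
    + rewrite <- tech_pow_Rmult, Rmult_assoc. apply (Hstep b); auto; try lia.
      intros j L' acc' Hj Hs'.
      apply (IHn (b + j)%Z ltac:(lia) ltac:(lia) (b + j)%Z L' acc' ltac:(lia) Hs').
Qed.

Lemma grows_from_steps_right3 B d X : grows_from B d X -> 0 <= X ->
  (B + 2 <= N)%Z -> (0 <= d <= N)%Z ->
  forall n B', (1 <= B')%Z -> (B <= B' + Z.of_nat n)%Z ->
  grows_from B' d ((1 - ((1 - p) ^ (S (Z.to_nat d))) ^ 3) ^ n * X).
Proof.
  intros HG HX HBN Hd. apply (grows_from_steps_right B d X _ 3); auto; try lia.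
  - pose proof (pow_unit_interval ((1 - p) ^ (S (Z.to_nat d))) 3
                  (pow_unit_interval (1 - p) _ ltac:(lra))). lra.
  - intros b L acc Y Hb HbN Hs HY. now apply (step_right_within3 b d L acc Y).
Qed.

Lemma grows_from_steps_right1 B d X : grows_from B d X -> 0 <= X ->
  (B <= N)%Z -> (0 <= d <= N)%Z ->
  forall n B', (1 <= B')%Z -> (B <= B' + Z.of_nat n)%Z ->
  grows_from B' d ((1 - (1 - p) ^ (S (Z.to_nat d))) ^ n * X).
Proof.
  intros HG HX HBN Hd. apply (grows_from_steps_right B d X _ 1); auto; try lia.
  - pose proof (pow_unit_interval (1 - p) (S (Z.to_nat d)) ltac:(lra)). lra.
  - intros b L acc Y Hb HbN Hs HY. now apply (step_right_next b d L acc Y).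
Qed.

(* The growth starts from the two occupied sites [(0,0)] and [(1,0)]. *)
Lemma prob_box_filled_ge_seed X : (1 <= N)%Z -> grows_from 1 0 X ->
  p * p * X <= prob_box_filled p.
Proof.
  intros HN HG.
  set (o0 := (0, 0)%Z : site). set (o1 := (1, 0)%Z : site).
  set (E := box_filled_event p).
  assert (HE : increasing_event E) by apply box_filled_event_increasing.
  change (prob_box_filled p) with (config_prob p E (box_list p) []).
  assert (H0 : In o0 (box_list p))
    by (apply box_list_in; [lra|]; unfold in_square; simpl; lia).
  destruct (config_prob_split p E ltac:(lra) HE _ _ H0 (box_list_NoDup p))
    as [L0 [Hn0 [A0 [B0 E0]]]].
  assert (H1 : In o1 L0).
  { apply A0. apply box_list_in; [lra|]; unfold in_square; simpl; lia.
    intro E'; injection E'; lia. }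
  destruct (config_prob_split p E ltac:(lra) HE _ _ H1 Hn0) as [L1 [Hn1 [A1 [B1 E1]]]].
  rewrite E0, !E1.
  assert (HX : X <= config_prob p E L1 [o1; o0]).
  { apply (HG 1%Z); [lia|]. split; [auto|split].
    - intros z Hz Hr. apply A1; [apply A0|].
      + apply box_list_in; auto; lra.
      + intros ->. apply Hr. simpl. lia.
      + intros ->. apply Hr. simpl. lia.
    - intros x y Hx Hy. apply closure_revealed; [|unfold in_square; simpl; lia].
      assert (x = 0 \/ x = 1)%Z as [-> | ->] by lia; assert (y = 0)%Z as -> by lia;
        simpl; auto. }
  pose proof (config_prob_bounds p E L1 [o0] ltac:(lra)).
  pose proof (config_prob_bounds p E L1 [o1] ltac:(lra)).
  pose proof (config_prob_bounds p E L1 [] ltac:(lra)).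
  assert (0 <= p * p * (config_prob p E L1 [o1; o0] - X)) by (apply Rmult_le_pos; nra).
  assert (0 <= p * (1 - p) * config_prob p E L1 [o0]) by (apply Rmult_le_pos; nra).
  assert (0 <= (1 - p) * p * config_prob p E L1 [o1]) by (apply Rmult_le_pos; nra).
  assert (0 <= (1 - p) * (1 - p) * config_prob p E L1 []) by (apply Rmult_le_pos; nra).
  lra.
Qed.

End Growth.

(** * Cost of the growth strategy *)

Definition ell (p : R) : R := ln (1 / p).

Definition small_p (p : R) : Prop := 0 < p <= 1 / 8 /\ 1 <= ell p.

(* In the main phase the rectangle reaches height [h] with width
   [2 * ceil (exp (3 p max(h, flat_height)) / p)]: below [flat_height], where
   [3 p h < 1], the width is kept at about [2e/p], so that it only grows once
   horizontal steps are unlikely to fail. *)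
Definition flat_height (p : R) : nat := Z.to_nat (up (1 / (3 * p))).
Definition main_height (p : R) : nat := Z.to_nat (Int_part (ell p / (3 * p))).
Definition main_scale (p : R) (h : nat) : R :=
  exp (3 * p * INR (Nat.max h (flat_height p))) / p.
Definition main_pairs (p : R) (h : nat) : Z := up (main_scale p h).
Definition main_width (p : R) (h : nat) : Z := (2 * main_pairs p h)%Z.

(* After the main phase the rectangle is widened to [late_width] so that each
   later vertical step fails with probability at most [p^6]. *)
Definition late_pairs (p : R) : Z := up (6 * ell p / (p * p)).
Definition late_width (p : R) : Z := (2 * late_pairs p)%Z.

Lemma main_pairs_bounds p h : 0 < p ->
  (1 <= main_pairs p h)%Z /\
  main_scale p h <= INR (Z.to_nat (main_pairs p h)) <= main_scale p h + 1.
Proof.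
  intros Hp. apply up_pos_bounds. apply Rdiv_lt_0_compat; [apply exp_pos|lra].
Qed.

Section Estimates.

Variable p : R.
Hypothesis Hsmall : small_p p.

Let Hp : 0 < p <= 1 / 8 := proj1 Hsmall.
Let Hell : 1 <= ell p := proj2 Hsmall.

Lemma exp_ell : exp (ell p) = 1 / p.
Proof. unfold ell. apply exp_ln, Rdiv_lt_0_compat; lra. Qed.

Lemma exp_opp_ell : exp (- ell p) = p.
Proof. rewrite exp_Ropp, exp_ell. field. lra. Qed.

Lemma inv_p_facts : let q := / p in
  8 <= q /\ / p ^ 5 = q ^ 5 /\ ell p <= q /\ 1 / p = q /\ 1 / (p * p) = q * q.
Proof.
  intros q. unfold q.
  assert (8 <= / p).
  { replace 8 with (/ (1 / 8)) by field. apply Rinv_le_contravar; lra. }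
  split; [auto|split; [rewrite pow_inv; auto|split; [|split]]].
  - unfold ell. replace (1 / p) with (/ p) by (field; lra). apply ln_le_id. lra.
  - field; lra.
  - field; lra.
Qed.

Lemma flat_height_bounds : 1 <= 3 * p * INR (flat_height p) <= 1 + 3 * p.
Proof.
  unfold flat_height.
  destruct (up_pos_bounds (1 / (3 * p)) ltac:(apply Rdiv_lt_0_compat; lra))
    as [_ [H1 H2]].
  split.
  - apply (Rmult_le_compat_l (3 * p)) in H1; [|lra].
    replace (3 * p * (1 / (3 * p))) with 1 in H1 by (field; lra). lra.
  - apply (Rmult_le_compat_l (3 * p)) in H2; [|lra].
    replace (3 * p * (1 / (3 * p) + 1)) with (1 + 3 * p) in H2 by (field; lra). lra.
Qed.

Lemma main_height_bounds :
  ell p / (3 * p) - 1 < INR (main_height p) <= ell p / (3 * p).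
Proof.
  unfold main_height.
  assert (0 <= ell p / (3 * p)) by (apply Rmult_le_pos; [lra|left; apply Rinv_0_lt_compat; lra]).
  apply Int_part_nonneg_bounds in H. tauto.
Qed.

Lemma main_height_exponent : ell p - 3 * p < 3 * p * INR (main_height p) <= ell p.
Proof.
  destruct main_height_bounds as [H1 H2]. split.
  - apply (Rmult_lt_compat_l (3 * p)) in H1; [|lra].
    replace (3 * p * (ell p / (3 * p) - 1)) with (ell p - 3 * p) in H1 by (field; lra). lra.
  - apply (Rmult_le_compat_l (3 * p)) in H2; [|lra].
    replace (3 * p * (ell p / (3 * p))) with (ell p) in H2 by (field; lra). lra.
Qed.

Lemma main_scale_le m : (m <= main_height p)%nat -> main_scale p m <= 9 / (p * p).
Proof.
  intros Hm. pose proof main_height_exponent as [_ HH].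
  pose proof flat_height_bounds as [_ H0].
  assert (HI : INR (Nat.max m (flat_height p)) <= INR m + INR (flat_height p)).
  { rewrite <- plus_INR. apply le_INR. lia. }
  assert (Hm' : INR m <= INR (main_height p)) by (apply le_INR; auto).
  assert (H : 3 * p * INR (Nat.max m (flat_height p)) <= ell p + 2) by nra.
  unfold main_scale. apply exp_le_mono in H. rewrite exp_plus, exp_ell in H.
  pose proof exp_2_le_9. pose proof (exp_pos 2).
  assert (0 < / p) by (apply Rinv_0_lt_compat; lra).
  assert (exp (3 * p * INR (Nat.max m (flat_height p))) <= 9 / p).
  { eapply Rle_trans; [exact H|]. unfold Rdiv. nra. }
  unfold Rdiv in *. rewrite Rinv_mult. nra.
Qed.

Lemma main_width_le_box m : (m <= main_height p)%nat ->
  (main_width p m + 2 <= box_side p)%Z.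
Proof.
  intros Hm. pose proof (main_scale_le m Hm) as HY.
  pose proof inv_p_facts as [Q1 [Q2 [_ [_ Q5]]]].
  pose proof (main_pairs_bounds p m ltac:(lra)) as [HK1 [_ HK2]].
  rewrite INR_Z_to_nat in HK2 by lia.
  pose proof (box_side_bounds p ltac:(lra)) as [HN _].
  apply le_IZR. unfold main_width. rewrite plus_IZR, mult_IZR.
  replace (9 / (p * p)) with (9 * (1 / (p * p))) in HY by (field; lra). rewrite Q5 in HY.
  rewrite Q2 in HN. set (q := / p) in *.
  assert (q ^ 5 >= 512 * (q * q)).
  { replace (q ^ 5) with ((q * q) * (q * q * q)) by ring.
    assert (q * q * q >= 512) by nra. nra. }
  assert (q * q >= 64) by nra.
  lra.
Qed.

Lemma late_width_bounds : (late_width p + 2 <= box_side p)%Z /\ (1 <= late_pairs p)%Z /\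
  IZR (late_width p) <= 12 * ell p / (p * p) + 2.
Proof.
  pose proof inv_p_facts as [Q1 [Q2 [Q3 [_ Q5]]]].
  assert (Hr : 0 < 6 * ell p / (p * p)) by (apply Rdiv_lt_0_compat; nra).
  pose proof (up_pos_bounds _ Hr) as [HK1 [_ HK2]]. fold (late_pairs p) in HK1, HK2.
  rewrite INR_Z_to_nat in HK2 by lia.
  pose proof (box_side_bounds p ltac:(lra)) as [HN _].
  replace (6 * ell p / (p * p)) with (6 * ell p * (1 / (p * p))) in HK2 by (field; lra).
  rewrite Q5 in HK2. rewrite Q2 in HN. set (q := / p) in *.
  assert (IZR (late_width p) <= 12 * ell p * (q * q) + 2).
  { unfold late_width. rewrite mult_IZR. lra. }
  split; [|split; [lia|]].
  - apply le_IZR. rewrite plus_IZR.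
    assert (H64 : q * q >= 64) by nra.
    assert (q * q * q >= 512) by nra.
    assert (q ^ 5 >= 64 * (q * q * q)).
    { replace (q ^ 5) with ((q * q) * (q * q * q)) by ring. nra. }
    assert (ell p * (q * q) <= q * (q * q)) by (apply Rmult_le_compat_r; nra).
    lra.
  - replace (12 * ell p / (p * p)) with (12 * ell p * (1 / (p * p))) by (field; lra).
    rewrite Q5. lra.
Qed.

Lemma main_height_le_box : (Z.of_nat (main_height p) + 1 <= box_side p)%Z.
Proof.
  pose proof inv_p_facts as [Q1 [Q2 [Q3 [Q4 Q5]]]].
  pose proof main_height_bounds as [_ H].
  pose proof (box_side_bounds p ltac:(lra)) as [HN _].
  apply le_IZR. rewrite plus_IZR, <- INR_IZR_INZ.
  replace (ell p / (3 * p)) with (ell p * (1 / p) / 3) in H by (field; lra).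
  rewrite Q4 in H. rewrite Q2 in HN. set (q := / p) in *.
  assert (q ^ 5 >= 512 * (q * q)).
  { replace (q ^ 5) with ((q * q) * (q * q * q)) by ring.
    assert (q * q * q >= 512) by nra. nra. }
  assert (ell p * q <= q * q) by (apply Rmult_le_compat_r; lra).
  assert (q * q >= 64) by nra. lra.
Qed.

Lemma main_step_up_factor h : (h < main_height p)%nat ->
  exp (- (ell p + ln 2 - 3 * p * INR h)) <= 1 - (1 - p * p) ^ Z.to_nat (main_pairs p h).
Proof.
  intros Hh. pose proof main_height_exponent as [_ HH].
  pose proof (main_pairs_bounds p h ltac:(lra)) as [_ [HK _]].
  set (K := Z.to_nat (main_pairs p h)) in *.
  set (y := p * exp (3 * p * INR h)).
  set (x := p * p * INR K).
  assert (Hxy : y <= x).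
  { assert (exp (3 * p * INR h) / p <= INR K).
    { eapply Rle_trans; [|exact HK]. unfold main_scale, Rdiv.
      apply Rmult_le_compat_r; [left; apply Rinv_0_lt_compat; lra|].
      apply exp_le_mono, Rmult_le_compat_l; [lra|]. apply le_INR. lia. }
    apply (Rmult_le_compat_l (p * p)) in H; [|nra].
    replace (p * p * (exp (3 * p * INR h) / p)) with y in H by (unfold y; field; lra).
    exact H. }
  assert (Hy0 : 0 < y) by (apply Rmult_lt_0_compat; [lra|apply exp_pos]).
  assert (Hy1 : y <= 1).
  { assert (INR h <= INR (main_height p)) by (apply le_INR; lia).
    assert (exp (3 * p * INR h) <= exp (ell p)) by (apply exp_le_mono; nra).
    rewrite exp_ell in H0. apply (Rmult_le_compat_l p) in H0; [|lra].
    replace (p * (1 / p)) with 1 in H0 by (field; lra). exact H0. }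
  assert (Hpow : (1 - p * p) ^ K <= 1 / (1 + x)).
  { eapply Rle_trans; [apply pow_1_minus_le_exp; nra|]. apply exp_opp_le_inv. lra. }
  replace (- (ell p + ln 2 - 3 * p * INR h)) with (- ell p + (- ln 2 + 3 * p * INR h))
    by ring.
  rewrite !exp_plus, exp_opp_ell, exp_Ropp, exp_ln by lra.
  assert (y / 2 <= 1 - 1 / (1 + x)).
  { replace (1 - 1 / (1 + x)) with (x / (1 + x)) by (field; lra).
    apply (Rmult_le_reg_r (2 * (1 + x))); [lra|].
    replace (y / 2 * (2 * (1 + x))) with (y * (1 + x)) by (field; lra).
    replace (x / (1 + x) * (2 * (1 + x))) with (2 * x) by (field; lra). nra. }
  replace (p * (/ 2 * exp (3 * p * INR h))) with (y / 2) by (unfold y; field).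
  lra.
Qed.

Lemma main_width_increment_le h : (flat_height p <= h)%nat ->
  INR (Z.to_nat (main_width p (S h) - main_width p h)) <= 12 * exp (3 * p * INR h) + 2.
Proof.
  intros Hh0.
  assert (Escale : forall m, (flat_height p <= m)%nat ->
            main_scale p m = exp (3 * p * INR m) / p).
  { intros m Hm. unfold main_scale. do 4 f_equal. lia. }
  pose proof (main_pairs_bounds p h ltac:(lra)) as [Ka [Kb _]].
  pose proof (main_pairs_bounds p (S h) ltac:(lra)) as [Kc [_ Kd]].
  rewrite INR_Z_to_nat in Kb, Kd by lia.
  rewrite Escale in Kb, Kd by lia.
  assert (He : exp (3 * p * INR (S h)) = exp (3 * p * INR h) * exp (3 * p)).
  { rewrite <- exp_plus. f_equal. rewrite S_INR. ring. }
  pose proof (exp_le_1_plus_double (3 * p) ltac:(lra)).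
  pose proof (exp_pos (3 * p * INR h)).
  assert (Hdiff : exp (3 * p * INR h) * exp (3 * p) / p - exp (3 * p * INR h) / p
                  <= 6 * exp (3 * p * INR h)).
  { replace (exp (3 * p * INR h) * exp (3 * p) / p - exp (3 * p * INR h) / p)
      with (exp (3 * p * INR h) * ((exp (3 * p) - 1) / p)) by (field; lra).
    rewrite (Rmult_comm 6). apply Rmult_le_compat_l; [lra|].
    apply (Rmult_le_reg_r p); [lra|]. unfold Rdiv. rewrite Rmult_assoc, Rinv_l by lra. lra. }
  rewrite He in Kd.
  destruct (Z_le_gt_dec (main_width p (S h) - main_width p h) 0).
  - replace (Z.to_nat _) with 0%nat by lia. simpl. lra.
  - rewrite INR_Z_to_nat by lia. unfold main_width. rewrite minus_IZR, !mult_IZR. lra.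
Qed.

(* Each of the [O(exp (3 p h))] new columns at height [h+1] is crossed with failure
   probability at most [exp (-3 p h)], so widening the rectangle costs [O(1)]. *)
Lemma main_step_right_factor h : (h < main_height p)%nat ->
  exp (- (28)) <= (1 - ((1 - p) ^ S (S h)) ^ 3)
                  ^ Z.to_nat (main_width p (S h) - main_width p h).
Proof.
  intros Hh.
  destruct (le_lt_dec (flat_height p) h) as [Hh0|Hh0].
  2:{ replace (main_width p (S h)) with (main_width p h).
      - rewrite Z.sub_diag. simpl. apply exp_opp_le_1. lra.
      - unfold main_width, main_pairs, main_scale. do 6 f_equal. lia. }
  set (w := exp (- (3 * p * INR (S (S h))))).
  assert (Hz : ((1 - p) ^ (S (S h))) ^ 3 <= w) by (apply pow_1_minus_cube_le_exp; lra).
  pose proof flat_height_bounds as [H01 _].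
  assert (Hw1 : w <= 1 / 2).
  { eapply Rle_trans; [|apply exp_m1_le_half]. apply exp_le_mono.
    assert (INR (flat_height p) <= INR (S (S h))) by (apply le_INR; lia). nra. }
  assert (Hw0 : 0 < w) by apply exp_pos.
  set (n := Z.to_nat (main_width p (S h) - main_width p h)).
  pose proof (main_width_increment_le h Hh0) as Hn. fold n in Hn.
  eapply Rle_trans; [|apply (exp_le_pow _ (2 * w)); [lra|]].
  - apply exp_le_mono.
    assert (Hwe : w * exp (3 * p * INR h) <= 1).
    { unfold w. rewrite <- exp_plus, <- exp_0. apply exp_le_mono. rewrite !S_INR. nra. }
    pose proof (pos_INR n).
    assert (w * INR n <= w * (12 * exp (3 * p * INR h) + 2)) by (apply Rmult_le_compat_l; lra).
    nra.
  - eapply Rle_trans; [apply exp_opp_double_le_1_minus; lra|lra].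
Qed.

(* [main_cost h] is the sum of [ell p + ln 2 - 3 p i + 28] over
   [h <= i < main_height p]. *)
Definition main_cost (h : nat) : R :=
  (INR (main_height p) - INR h) * (ell p + ln 2 + 28)
  - (3 * p / 2) * (INR (main_height p) * (INR (main_height p) - 1) - INR h * (INR h - 1)).

Lemma main_cost_S h : main_cost h = (ell p + ln 2 - 3 * p * INR h + 28) + main_cost (S h).
Proof. unfold main_cost. rewrite S_INR. field. Qed.

Lemma main_cost_top : main_cost (main_height p) = 0.
Proof. unfold main_cost. ring. Qed.

Lemma grows_from_main_step h c : (h < main_height p)%nat ->
  grows_from p (main_width p (S h)) (Z.of_nat (S h)) (exp (- c)) ->
  grows_from p (main_width p h) (Z.of_nat h)
    (exp (- ((ell p + ln 2 - 3 * p * INR h + 28) + c))).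
Proof.
  intros Hh HG.
  assert (Hp1 : 0 < p < 1) by lra.
  pose proof (main_width_le_box (S h) ltac:(lia)) as HS1.
  pose proof main_height_le_box as HS2.
  pose proof (main_pairs_bounds p h ltac:(lra)) as [HK1 _].
  set (n := Z.to_nat (main_width p (S h) - main_width p h)).
  pose proof (grows_from_steps_right3 p Hp1 _ _ _ HG ltac:(left; apply exp_pos) HS1
                ltac:(lia) n (main_width p h) ltac:(unfold main_width; lia)
                ltac:(unfold n; lia)) as Hright.
  rewrite Nat2Z.id in Hright.
  apply grows_from_cost with (c' := 28) in Hright; [|now apply main_step_right_factor].
  replace (Z.of_nat (S h)) with (Z.of_nat h + 1)%Z in Hright by lia.
  pose proof (grows_from_step_up p Hp1 _ _ (Z.to_nat (main_pairs p h)) _ Hright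
                ltac:(lia) ltac:(lia) ltac:(unfold main_width; lia)) as Hup.
  apply grows_from_cost with (c' := ell p + ln 2 - 3 * p * INR h) in Hup;
    [|now apply main_step_up_factor].
  eapply grows_from_le; [exact Hup|]. right. f_equal. ring.
Qed.

Lemma grows_from_main c :
  grows_from p (main_width p (main_height p)) (Z.of_nat (main_height p)) (exp (- c)) ->
  grows_from p (main_width p 0) 0 (exp (- (main_cost 0 + c))).
Proof.
  intros HG.
  enough (H : forall k, (k <= main_height p)%nat ->
    grows_from p (main_width p (main_height p - k)) (Z.of_nat (main_height p - k))
      (exp (- (main_cost (main_height p - k) + c)))).
  { specialize (H (main_height p) ltac:(lia)). now rewrite Nat.sub_diag in H. }
  induction k as [|k IH]; intros Hk.
  - rewrite Nat.sub_0_r, main_cost_top, Rplus_0_l. exact HG.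
  - set (h := (main_height p - S k)%nat).
    replace (main_height p - k)%nat with (S h) in IH by (unfold h; lia).
    eapply grows_from_le; [apply (grows_from_main_step h); [unfold h; lia|apply IH; lia]|].
    rewrite (main_cost_S h). right. f_equal. ring.
Qed.

Local Notation N := (box_side p).

Lemma small_pow_succ n : 0 <= p ^ S n <= 1 / 2.
Proof. pose proof (pow_unit_interval p n ltac:(lra)). simpl. split; nra. Qed.

Lemma IZR_box_side_nonneg : 0 <= IZR N.
Proof. apply IZR_le, box_side_nonneg. lra. Qed.

Lemma final_columns_factor :
  exp (- (2 * p ^ 4 * IZR N)) <= (1 - (1 - p) ^ S (Z.to_nat N)) ^ Z.to_nat N.
Proof.
  pose proof inv_p_facts as [Q1 [Q2 _]].
  pose proof (box_side_bounds p ltac:(lra)) as [HN _].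
  pose proof (box_side_nonneg p ltac:(lra)) as HN0. pose proof IZR_box_side_nonneg.
  rewrite <- (INR_Z_to_nat N) by exact HN0.
  apply exp_le_pow; [pose proof (small_pow_succ 3); lra|].
  eapply Rle_trans; [apply exp_opp_double_le_1_minus, small_pow_succ|].
  assert ((1 - p) ^ S (Z.to_nat N) <= p ^ 4); [|lra].
  eapply Rle_trans; [apply pow_1_minus_le_exp; lra|].
  rewrite S_INR, INR_Z_to_nat by exact HN0.
  eapply Rle_trans; [apply exp_opp_le_inv; nra|].
  rewrite Q2 in HN. set (q := / p) in *.
  assert (Hpq : p * q = 1) by (unfold q; field; lra).
  assert (0 < q ^ 4) by (apply pow_lt; lra).
  assert (0 < p ^ 4) by (apply pow_lt; lra).
  assert (p * (IZR N + 1) >= q ^ 4).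
  { replace (q ^ 5) with (q * q ^ 4) in HN by ring.
    assert (p * (q * q ^ 4) = q ^ 4) by (rewrite <- Rmult_assoc, Hpq; ring).
    assert (p * (q * q ^ 4) < p * (IZR N + 1)) by (apply Rmult_lt_compat_l; lra).
    lra. }
  assert (p ^ 4 * q ^ 4 = 1) by (rewrite <- Rpow_mult_distr, Hpq; apply pow1).
  apply (Rmult_le_reg_r (1 + p * (IZR N + 1))); [nra|].
  unfold Rdiv. rewrite Rmult_1_l, Rinv_l by nra. nra.
Qed.

Lemma late_rows_factor k : (Z.of_nat k <= N)%Z ->
  exp (- (2 * p ^ 6 * IZR N)) <= (1 - (1 - p * p) ^ Z.to_nat (late_pairs p)) ^ k.
Proof.
  intros Hk.
  assert (Hr : 0 < 6 * ell p / (p * p)) by (apply Rdiv_lt_0_compat; nra).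
  pose proof (up_pos_bounds _ Hr) as [_ [HK _]]. fold (late_pairs p) in HK.
  pose proof (small_pow_succ 5) as H6.
  eapply Rle_trans; [|apply (exp_le_pow _ (2 * p ^ 6)); [lra|]].
  - apply exp_le_mono. apply Ropp_le_contravar, Rmult_le_compat_l; [lra|].
    rewrite INR_IZR_INZ. now apply IZR_le.
  - eapply Rle_trans; [apply exp_opp_double_le_1_minus; exact H6|].
    assert ((1 - p * p) ^ Z.to_nat (late_pairs p) <= p ^ 6); [|lra].
    eapply Rle_trans; [apply pow_1_minus_le_exp; nra|].
    replace (p ^ 6) with (exp (- ell p) ^ 6) by now rewrite exp_opp_ell.
    rewrite exp_pow. apply exp_le_mono.
    apply (Rmult_le_compat_l (p * p)) in HK; [|nra].
    replace (p * p * (6 * ell p / (p * p))) with (6 * ell p) in HK by (field; lra).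
    simpl INR. lra.
Qed.

Lemma late_columns_factor :
  exp (- (2 * p * IZR (late_width p)))
  <= (1 - ((1 - p) ^ S (main_height p)) ^ 3) ^ Z.to_nat (late_width p).
Proof.
  pose proof main_height_exponent as [H1 _].
  pose proof late_width_bounds as [_ [HK _]].
  rewrite <- (INR_Z_to_nat (late_width p)) by (unfold late_width; lia).
  apply exp_le_pow; [lra|].
  eapply Rle_trans; [apply exp_opp_double_le_1_minus; lra|].
  assert (((1 - p) ^ S (main_height p)) ^ 3 <= p); [|lra].
  eapply Rle_trans; [apply pow_1_minus_cube_le_exp; lra|].
  apply Rle_trans with (exp (- ell p)); [|rewrite exp_opp_ell; lra].
  apply exp_le_mono. rewrite S_INR. nra.
Qed.

Lemma early_columns_factor :
  exp (- (ell p * IZR (main_width p 0))) <= (1 - ((1 - p) ^ 1) ^ 3) ^ Z.to_nat (main_width p 0).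
Proof.
  pose proof (main_pairs_bounds p 0 ltac:(lra)) as [HK _].
  rewrite <- (INR_Z_to_nat (main_width p 0)) by (unfold main_width; lia).
  apply exp_le_pow; [lra|].
  rewrite exp_opp_ell. simpl.
  assert (0 <= (1 - p) * (1 - p) <= 1) by (split; nra). nra.
Qed.

Definition late_cost : R :=
  2 * p * IZR (late_width p) + 2 * p ^ 6 * IZR N + 2 * p ^ 4 * IZR N.

Lemma grows_from_late :
  grows_from p (main_width p (main_height p)) (Z.of_nat (main_height p)) (exp (- late_cost)).
Proof.
  assert (Hp1 : 0 < p < 1) by lra.
  pose proof main_height_le_box as SH.
  pose proof late_width_bounds as [SW1 [SW2 _]].
  pose proof (main_width_le_box (main_height p) ltac:(lia)) as SBH.
  pose proof (main_pairs_bounds p (main_height p) ltac:(lra)) as [HKH _].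
  pose proof (box_side_nonneg p ltac:(lra)) as HN0.
  assert (Gfull : grows_from p N N (exp (- 0))).
  { rewrite Ropp_0, exp_0. exact (grows_from_full p Hp1). }
  pose proof (grows_from_steps_right1 p Hp1 _ _ _ Gfull ltac:(left; apply exp_pos)
                ltac:(lia) ltac:(lia) (Z.to_nat N) (late_width p)
                ltac:(unfold late_width; lia) ltac:(unfold late_width; lia)) as Gcols.
  apply grows_from_cost with (c' := 2 * p ^ 4 * IZR N) in Gcols;
    [|exact final_columns_factor].
  set (k := Z.to_nat (N - Z.of_nat (main_height p))).
  pose proof (grows_from_steps_up p Hp1 _ _ (Z.to_nat (late_pairs p)) _ Gcols
                ltac:(lia) ltac:(unfold late_width; lia) k ltac:(unfold k; lia)) as Grows.
  replace (N - Z.of_nat k)%Z with (Z.of_nat (main_height p)) in Grows by (unfold k; lia).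
  apply grows_from_cost with (c' := 2 * p ^ 6 * IZR N) in Grows;
    [|apply late_rows_factor; unfold k; lia].
  pose proof (grows_from_steps_right3 p Hp1 _ _ _ Grows ltac:(left; apply exp_pos) SW1
                ltac:(lia) (Z.to_nat (late_width p)) (main_width p (main_height p))
                ltac:(unfold main_width; lia) ltac:(unfold late_width, main_width; lia))
    as Gwide.
  rewrite Nat2Z.id in Gwide.
  apply grows_from_cost with (c' := 2 * p * IZR (late_width p)) in Gwide;
    [|exact late_columns_factor].
  eapply grows_from_le; [exact Gwide|]. unfold late_cost. right. f_equal. ring.
Qed.

Definition total_cost : R :=
  2 * ell p + ell p * IZR (main_width p 0) + main_cost 0 + late_cost.

Lemma prob_box_filled_ge_total_cost : exp (- total_cost) <= prob_box_filled p.
Proof.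
  assert (Hp1 : 0 < p < 1) by lra.
  pose proof (main_width_le_box 0 ltac:(lia)) as SB0.
  pose proof (main_pairs_bounds p 0 ltac:(lra)) as [HK0 _].
  pose proof (grows_from_main _ grows_from_late) as Gmain.
  pose proof (grows_from_steps_right3 p Hp1 _ _ _ Gmain ltac:(left; apply exp_pos) SB0
                ltac:(unfold main_width in *; lia) (Z.to_nat (main_width p 0)) 1 ltac:(lia)
                ltac:(unfold main_width; lia))
    as Gearly.
  apply grows_from_cost with (c' := ell p * IZR (main_width p 0)) in Gearly;
    [|exact early_columns_factor].
  eapply Rle_trans;
    [|apply (prob_box_filled_ge_seed p Hp1 _ ltac:(unfold main_width in *; lia) Gearly)].
  replace (p * p) with (exp (- ell p) * exp (- ell p)) by now rewrite exp_opp_ell.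
  rewrite <- !exp_plus. apply exp_le_mono. unfold total_cost. lra.
Qed.

Lemma main_width_0_le : IZR (main_width p 0) <= 20 / p.
Proof.
  pose proof (main_pairs_bounds p 0 ltac:(lra)) as [HK [_ HK2]].
  pose proof flat_height_bounds as [_ H0].
  rewrite INR_Z_to_nat in HK2 by lia. unfold main_width. rewrite mult_IZR.
  assert (main_scale p 0 <= 9 / p).
  { unfold main_scale. replace (Nat.max 0 (flat_height p)) with (flat_height p) by lia.
    unfold Rdiv. apply Rmult_le_compat_r; [left; apply Rinv_0_lt_compat; lra|].
    eapply Rle_trans; [|apply exp_2_le_9]. apply exp_le_mono. lra. }
  assert (1 <= 1 / p) by (apply (Rmult_le_reg_r p); [lra|]; field_simplify; lra).
  assert (9 / p = 9 * (1 / p)) by (field; lra).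
  assert (20 / p = 20 * (1 / p)) by (field; lra).
  lra.
Qed.

(* Compare with the same closed form at the real height [ell p / (3 p)],
   where it equals the right-hand side. *)
Lemma main_cost_0_le :
  main_cost 0 <= ell p * ell p / (6 * p) + (ln 2 + 28) * ell p / (3 * p) + ell p / 2.
Proof.
  pose proof main_height_bounds as [H1 H2]. pose proof ln_2_pos as Hln2.
  set (X := ell p / (3 * p)) in *.
  set (m := INR (main_height p)) in *.
  set (c := ell p + ln 2 + 28).
  assert (HX : 3 * p * X = ell p) by (unfold X; field; lra).
  assert (E0 : main_cost 0 = m * c - 3 * p / 2 * (m * (m - 1))).
  { unfold main_cost, c, m. simpl INR. field. }
  assert (E1 : (X * c - 3 * p / 2 * (X * (X - 1))) - (m * c - 3 * p / 2 * (m * (m - 1)))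
               = (X - m) * (c - 3 * p / 2 * (X + m - 1))) by field.
  assert (S1 : 0 <= (X - m) * (c - 3 * p / 2 * (X + m - 1))).
  { apply Rmult_le_pos; [lra|]. unfold c.
    assert (3 * p / 2 * (X + m - 1) <= ell p) by nra. lra. }
  assert (E2 : X * c - 3 * p / 2 * (X * (X - 1))
             = ell p * ell p / (6 * p) + (ln 2 + 28) * ell p / (3 * p) + ell p / 2).
  { unfold X, c. field. lra. }
  lra.
Qed.

Lemma late_cost_le : late_cost <= (24 * ell p + 2) / p + 6 * p.
Proof.
  pose proof late_width_bounds as [_ [_ BW]].
  pose proof inv_p_facts as [Q1 [Q2 _]].
  pose proof (box_side_bounds p ltac:(lra)) as [_ HN].
  pose proof IZR_box_side_nonneg.
  rewrite Q2 in HN. set (q := / p) in *.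
  assert (Hpq : p * q = 1) by (unfold q; field; lra).
  replace (12 * ell p / (p * p)) with (12 * ell p * (q * q)) in BW by (unfold q; field; lra).
  replace ((24 * ell p + 2) / p) with ((24 * ell p + 2) * q) by (unfold q; field; lra).
  unfold late_cost.
  assert (T1 : 2 * p * IZR (late_width p) <= 24 * ell p * q + 4 * p).
  { assert (p * (q * q) = q) by (rewrite <- Rmult_assoc, Hpq; ring). nra. }
  assert (T2 : 2 * p ^ 6 * IZR (box_side p) <= 2 * p).
  { assert (0 < p ^ 6) by (apply pow_lt; lra).
    assert (Hb : 2 * p ^ 6 * IZR (box_side p) <= 2 * p ^ 6 * q ^ 5)
      by (apply Rmult_le_compat_l; lra).
    replace (2 * p ^ 6 * q ^ 5) with (2 * p * (p * q) ^ 5) in Hb by ring.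
    rewrite Hpq, pow1 in Hb. lra. }
  assert (T3 : 2 * p ^ 4 * IZR (box_side p) <= 2 * q).
  { assert (0 < p ^ 4) by (apply pow_lt; lra).
    assert (Hb : 2 * p ^ 4 * IZR (box_side p) <= 2 * p ^ 4 * q ^ 5)
      by (apply Rmult_le_compat_l; lra).
    replace (2 * p ^ 4 * q ^ 5) with (2 * q * (p * q) ^ 4) in Hb by ring.
    rewrite Hpq, pow1 in Hb. lra. }
  lra.
Qed.

Lemma total_cost_le eps : 0 < eps -> 70 <= eps * ell p ->
  total_cost <= (1 / 6 + eps) * (1 / p) * ell p ^ 2.
Proof.
  intros He Hel.
  pose proof main_width_0_le as B0.
  pose proof main_cost_0_le as BF.
  pose proof late_cost_le as BL.
  pose proof inv_p_facts as [Q1 [_ [_ [Q4 _]]]].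
  pose proof ln_2_lt_1. pose proof ln_2_pos.
  set (q := / p) in *.
  replace (20 / p) with (20 * q) in B0 by (unfold q; field; lra).
  replace ((24 * ell p + 2) / p) with ((24 * ell p + 2) * q) in BL by (unfold q; field; lra).
  replace (ell p * ell p / (6 * p)) with (ell p * ell p * q / 6) in BF
    by (unfold q; field; lra).
  replace ((ln 2 + 28) * ell p / (3 * p)) with ((ln 2 + 28) * ell p * q / 3) in BF
    by (unfold q; field; lra).
  rewrite Q4. unfold total_cost.
  assert (0 <= ell p * q) by nra.
  assert (ell p * IZR (main_width p 0) <= 20 * ell p * q) by nra.
  assert (ell p <= ell p * q) by nra.
  assert (q <= ell p * q) by nra.
  assert (eps * (q * ell p ^ 2) >= 70 * ell p * q).
  { replace (eps * (q * ell p ^ 2)) with ((eps * ell p) * (ell p * q)) by ring. nra. }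
  assert ((ln 2 + 28) * ell p * q / 3 <= 10 * (ell p * q)) by nra.
  replace ((1 / 6 + eps) * q * ell p ^ 2) with (ell p * ell p * q / 6 + eps * (q * ell p ^ 2))
    by (simpl; field).
  lra.
Qed.

End Estimates.

Theorem proposition2 :
  forall eps : R, 0 < eps ->
  exists p0 : R, 0 < p0 /\
    forall p : R, 0 < p < p0 ->
      prob_box_filled p >=
      exp (- ((1 / 6 + eps) * (1 / p) * (ln (1 / p)) ^ 2)).
Proof.
  intros eps He.
  exists (Rmin (1 / 8) (exp (- (70 / eps + 1)))). split.
  - apply Rmin_glb_lt; [lra|apply exp_pos].
  - intros p [Hp Hp0].
    assert (H1 : p < 1 / 8) by (eapply Rlt_le_trans; [exact Hp0|apply Rmin_l]).
    assert (H2 : p < exp (- (70 / eps + 1))) by (eapply Rlt_le_trans; [exact Hp0|apply Rmin_r]).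
    assert (Hl : 70 / eps + 1 < ell p).
    { unfold ell. apply ln_increasing in H2; [|auto]. rewrite ln_exp in H2.
      replace (1 / p) with (/ p) by (field; lra). rewrite ln_Rinv by auto. lra. }
    assert (Hsmall : small_p p).
    { split; [lra|]. assert (0 < 70 / eps) by (apply Rdiv_lt_0_compat; lra). lra. }
    assert (Hel : 70 <= eps * ell p).
    { assert (70 / eps * eps = 70) by (field; lra). nra. }
    apply Rle_ge. eapply Rle_trans; [|exact (prob_box_filled_ge_total_cost p Hsmall)].
    apply exp_le_mono, Ropp_le_contravar. now apply total_cost_le.
Qed.
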